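(* Let $p$ be a prime and $P$ a finite $p$-group. Assume that in the Roquette category $\mathcal{R}_p$ there is an isomorphism $$P\cong \mathbf{1}\oplus\bigoplus_{m=1}^{\infty} a_m\,\partial C_{p^m},$$ with $a_m\in\mathbb{N}$ (almost all zero), where $a_m\,\partial C_{p^m}$ denotes the direct sum of $a_m$ copies of $\partial C_{p^m}$. Then for every $m\ge 1$, $$a_m=\frac{l_m(P)-l_{m-1}(P)}{p^{m-1}(p-1)}.$$
   Context: $C_{p^m}$ is the cyclic group of order $p^m$ and $\mathbf{1}$ the trivial group. For $n\ge 1$, $l_n(P)$ is the number of conjugacy classes of elements $s\in P$ such that $s^{1+p^n}$ is conjugate to $s$ in $P$; and $l_0(P)=1$. The Roquette category $\mathcal{R}_p$ (introduced by Bouc) is an additive tensor category whose objects include all finite $p$-groups, with the following properties: every finite $p$-group $P$ has a canonical direct summand $\partial P$ in $\mathcal{R}_p$ (its edge), with $P\cong\bigoplus_{N\trianglelefteq P}\partial(P/N)$ (in particular $\partial\mathbf{1}=\mathbf{1}$ and $C_{p^m}\cong \partial C_{p^m}\oplus C_{p^{m-1}}$); and the additive functors from $\mathcal{R}_p$ to abelian groups are exactly (the extensions $\hat F$ of) the rational $p$-biset functors $F$, with $\hat F(P)=F(P)$ and $\hat F(\partial P)=\partial F(P)$, the faithful part of $F(P)$ (the intersection of the kernels of the deflation maps $F(P)\to F(P/N)$ over nontrivial normal subgroups $N$ of $P$). *)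

From HB Require Import structures.
From mathcomp Require Import all_boot all_order all_algebra all_fingroup all_solvable all_field all_character.
Set Implicit Arguments. Unset Strict Implicit. Unset Printing Implicit Defensive.
Import GRing.Theory Num.Theory.
Local Open Scope ring_scope.

(* A concrete model of Bouc's Roquette category R_p.                         *)
(*   Hom_{R_p^*}(H, K) = R_Q(K x H^op): the group of virtual characters of     *)
(*   Q-linear (K,H)-bimodules, i.e. of Q(K x H)-modules, (k,h).m = k m h^-1.  *)
(*   A morphism H -> K (H in gT1, K in gT2) is stored as its character        *)
(*   f : gT2 -> gT1 -> algC, f k h = value at (k,h), zero outside K x H.     *)
(*   Composition is the tensor product of bimodules over QH:                  *)
(*     (f o g)(r,t) = 1/|H| sum_{h in H} f(r,h) g(h,t).                       *)
(*   R_p is the idempotent completion of the additive completion of this.     *)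

Section Roquette.

Variables gT1 gT2 gT3 : finGroupType.

Definition rat_char (gT : finGroupType) (G : {group gT}) (phi : 'CF(G)) : Prop :=
  exists n (rG : mx_representation rat G n), phi = cfRepr (map_repr ratr rG).

Definition in_RQ (gT : finGroupType) (G : {group gT}) (phi : 'CF(G)) : Prop :=
  exists chi1 chi2, [/\ rat_char chi1, rat_char chi2 & phi = chi1 - chi2].

Definition roq_hom (H : {group gT1}) (K : {group gT2}) (f : gT2 -> gT1 -> algC) : Prop :=
  exists2 phi : 'CF(setX K H), in_RQ phi & forall k h, f k h = phi (k, h).

Definition roq_comp (K : {group gT2}) (g : gT3 -> gT2 -> algC) (f : gT2 -> gT1 -> algC)
  : gT3 -> gT1 -> algC :=
  fun r t => (#|K|%:R)^-1 * \sum_(k in K) g r k * f k t.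

End Roquette.

Section Edge.

Variable gT : finGroupType.

(* Moebius function mu(1,N) of the poset of normal subgroups of P *)
Fixpoint mob_aux (P : {set gT}) (n : nat) (N : {group gT}) : int :=
  match n with
  | 0 => 0
  | n'.+1 => if N :==: 1%g then 1 else
      - \sum_(M : {group gT} | (M <| P)%g && (M \proper N)) mob_aux P n' M
  end.

Definition mobius_normal (P : {set gT}) (N : {group gT}) : int := mob_aux P #|N| N.

(* character of the (P,P)-bimodule Q[P/N] = Inf^P_{P/N} o Def^P_{P/N} *)
Definition infdef (P N : {group gT}) : gT -> gT -> algC :=
  fun a b => if (a \in P) && (b \in P) then
     (#|[set C in rcosets N P | ((a *: C) :* b^-1)%g == C]|)%:R else 0.

Definition roq_id (P : {group gT}) : gT -> gT -> algC := infdef P 1%G.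

(* the edge idempotent e_P = sum_{N normal in P} mu(1,N) Inf^P_{P/N} Def^P_{P/N};
   the edge dP is the object (P, e_P) of R_p *)
Definition edge_idem (P : {group gT}) : gT -> gT -> algC :=
  fun a b => \sum_(N : {group gT} | (N <| P)%g) (mobius_normal P N)%:~R * infdef P N a b.

End Edge.

(* P is isomorphic in R_p to the direct sum of the edges dG_i of the groups
   G_i (i < n): there are morphisms f_i in e_{G_i} Hom(P, G_i) and
   g_i in Hom(G_i, P) e_{G_i} with sum_i g_i o f_i = id_P and
   f_i o g_j = delta_{ij} e_{G_i}. *)
Definition roq_iso_edges (gT cT : finGroupType) (P : {group gT}) (n : nat)
    (G : 'I_n -> {group cT}) : Prop :=
  exists (f : 'I_n -> cT -> gT -> algC) (g : 'I_n -> gT -> cT -> algC),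
  [/\ forall i, roq_hom P (G i) (f i) /\ roq_hom (G i) P (g i),
      forall i, roq_comp (G i) (edge_idem (G i)) (f i) =2 f i
                /\ roq_comp P (f i) (roq_id P) =2 f i,
      forall i, roq_comp (G i) (g i) (edge_idem (G i)) =2 g i
                /\ roq_comp P (roq_id P) (g i) =2 g i,
      (fun a b => \sum_(i < n) roq_comp (G i) (g i) (f i) a b) =2 roq_id P
    & forall i j, roq_comp P (f i) (g j) =2
                  (if i == j then edge_idem (G i) else fun _ _ => 0)].

Definition lnum (p : nat) (gT : finGroupType) (P : {group gT}) (n : nat) : nat :=
  if n == 0%N then 1%N else
  #|[set C in classes P | [exists s in C, (s ^+ (1 + p ^ n)%N)%g \in C]]|.

From HB Require Import structures.
From mathcomp Require Import all_boot all_order all_algebra all_fingroup all_solvable all_field all_character.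
From mathcomp Require Import zify.
Import GRing.Theory Num.Theory.
Local Open Scope ring_scope.

Set Implicit Arguments. Unset Strict Implicit. Unset Printing Implicit Defensive.

(* For a coprime to p, the twisted trace tau_a(F) = 1/|H| sum_{x in H} F(x^a, x)
   of an endomorphism F of a p-group H in R_p^* satisfies
   tau_a(g o f) = tau_a(f o g): a rational character of K x H takes the same
   value at (k, y) and at (k^a, y^a), these being Galois conjugate, and
   y |-> y^a permutes H.  So tau_a is additive on direct sums in R_p.  For
   a = 1 + p^n, counting conjugacy classes gives tau_a(id_P) = l_n(P), and the
   Moebius function of a cyclic p-group gives tau_a(e_{C_{p^k}}) = 1 if k = 0,
   p^k - p^(k-1) if 1 <= k <= n, and 0 if k > n.  Comparing n with n - 1 yields
   l_n(P) - l_{n-1}(P) = a_n (p^n - p^(n-1)). *)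

Lemma expmx_conj_diag n (B : 'M[algC]_n.+1) (e : 'rV_n.+1) k :
  B \in unitmx ->
  (invmx B *m diag_mx e *m B) ^+ k = invmx B *m diag_mx (\row_i e 0 i ^+ k) *m B.
Proof.
move=> uB; elim: k => [|k IH].
  have -> : diag_mx (\row_i e 0 i ^+ 0) = 1%:M :> 'M_n.+1.
    by apply/matrixP=> i j; rewrite !mxE; case: (i == j); rewrite ?mxE ?expr0.
  by rewrite expr0 mulmx1 mulVmx.
rewrite exprS IH -mulmxE !mulmxA -(mulmxA _ B) mulmxV // mulmx1.
rewrite -(mulmxA (invmx B)) mulmx_diag; congr (_ *m diag_mx _ *m _).
by apply/rowP=> j; rewrite !mxE exprS.
Qed.

Lemma rat_char_expg_coprime (gT : finGroupType) (G : {group gT}) (phi : 'CF(G)) x k :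
  rat_char phi -> x \in G -> coprime k #[x]%g -> phi (x ^+ k)%g = phi x.
Proof.
case=> n [rG ->] Gx cok; have Gxk : (x ^+ k)%g \in G by rewrite groupX.
case: n rG => [|n] rG; first by rewrite !cfunE Gx Gxk /= /mxtrace !big_ord0.
set rC := map_repr ratr rG.
have [e [[B uB Dx] [e1 _] [cx _] _]] := repr_rsim_diag rC Gx.
(* u raises the #[x]-th roots of unity e_i to the k-th power and fixes the
   rational trace of rG x *)
have [u Du] := Qn_aut_exists cok.
have chir : cfRepr rC x = ratr (\tr (rG x)).
  by rewrite cfunE Gx mulr1n map_reprE trace_map_mx.
rewrite chir -(fmorph_rat u) -chir cx rmorph_sum /=.
rewrite cfunE Gxk mulr1n repr_mxX // Dx expmx_conj_diag //.
rewrite mxtrace_mulC mulmxA mulmxV // mul1mx mxtrace_diag.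
by apply: eq_bigr => i _; rewrite mxE (Du _ (e1 i)).
Qed.

Lemma in_RQ_expg_coprime (gT : finGroupType) (G : {group gT}) (phi : 'CF(G)) x k :
  in_RQ phi -> x \in G -> coprime k #[x]%g -> phi (x ^+ k)%g = phi x.
Proof.
case=> c1 [c2 [r1 r2 ->]] Gx co.
by rewrite !cfunE (rat_char_expg_coprime r1 Gx co) (rat_char_expg_coprime r2 Gx co).
Qed.

Lemma expg_pair (A B : finGroupType) (a : A) (b : B) n :
  ((a, b) ^+ n = (a ^+ n, b ^+ n))%g.
Proof. by elim: n => // n IH; rewrite !expgS IH. Qed.

Lemma pgroup_coprime_add1_expn (gT : finGroupType) (G : {group gT}) p n :
  prime p -> (0 < n)%N -> (p.-group G)%g -> coprime #|G| (1 + p ^ n).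
Proof.
move=> pp n0 pG; rewrite coprime_sym; apply: (p'nat_coprime (pi := p)) => //.
rewrite p'natE // dvdn_addl ?dvdn_exp // dvdn1.
by rewrite neq_ltn prime_gt1 ?orbT.
Qed.

Lemma sum_expg_coprime (R : nmodType) (gT : finGroupType) (H : {group gT}) a
    (F : gT -> R) :
  coprime #|H| a -> \sum_(y in H) F (y ^+ a)%g = \sum_(y in H) F y.
Proof.
move=> co; have inj : {in H &, injective (fun y => y ^+ a)%g} := can_in_inj (expgK co).
have im : [set (y ^+ a)%g | y in H] = H.
  apply/eqP; rewrite eqEcard card_in_imset // leqnn andbT.
  by apply/subsetP=> z /imsetP[y Hy ->]; apply: groupX.
by rewrite -[in RHS]im big_imset.
Qed.

Definition twisted_trace (T : finGroupType) (a : nat) (H : {group T})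
    (F : T -> T -> algC) : algC :=
  (#|H|%:R)^-1 * \sum_(x in H) F (x ^+ a)%g x.

Lemma eq_twisted_trace (T : finGroupType) a (H : {group T}) (F F' : T -> T -> algC) :
  F =2 F' -> twisted_trace a H F = twisted_trace a H F'.
Proof. by move=> eqF; rewrite /twisted_trace; under eq_bigr do rewrite eqF. Qed.

Lemma twisted_trace_sum (T : finGroupType) a (H : {group T}) n
    (F : 'I_n -> T -> T -> algC) :
  twisted_trace a H (fun x y => \sum_(i < n) F i x y) =
  \sum_(i < n) twisted_trace a H (F i).
Proof. by rewrite /twisted_trace exchange_big mulr_sumr. Qed.

Lemma twisted_trace_comp (gT cT : finGroupType) (P : {group gT}) (K : {group cT}) a
    (f : cT -> gT -> algC) (g : gT -> cT -> algC) :
  roq_hom P K f -> coprime #|K| a -> coprime #|P| a ->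
  twisted_trace a P (roq_comp K g f) = twisted_trace a K (roq_comp P f g).
Proof.
case=> phi Rphi Dphi coK coP.
have f_expg k y : k \in K -> y \in P -> f (k ^+ a)%g (y ^+ a)%g = f k y.
  move=> Kk Py; have KPky : (k, y) \in setX K P by rewrite in_setX Kk Py.
  rewrite !Dphi -expg_pair (in_RQ_expg_coprime Rphi) //.
  apply: coprime_dvdr (order_dvdG KPky) _.
  by rewrite cardsX coprimeMr ![coprime a _]coprime_sym coK.
rewrite /twisted_trace /roq_comp.
transitivity ((#|P|%:R)^-1 * ((#|K|%:R)^-1 * \sum_(k in K) \sum_(y in P)
   f (k ^+ a)%g (y ^+ a)%g * g (y ^+ a)%g k)).
  congr (_ * _); rewrite -mulr_sumr exchange_big /=; congr (_ * _).
  apply: eq_bigr => k Kk; apply: eq_bigr => y Py.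
  by rewrite mulrC f_expg.
rewrite mulrA [(_^-1 * _^-1)]mulrC -mulrA; congr (_ * _).
rewrite mulr_sumr; apply: eq_bigr => k Kk; congr (_ * _).
by rewrite (sum_expg_coprime (fun z => f (k ^+ a)%g z * g z k) coP).
Qed.

Section ConjugacyClassCount.

Variables (gT : finGroupType) (P : {group gT}) (a : nat).

Lemma mem_class_expgJ (y u : gT) : u \in P ->
  (((y ^ u) ^+ a)%g \in ((y ^ u) ^: P)%g) = ((y ^+ a)%g \in (y ^: P)%g).
Proof.
move=> Pu; rewrite -conjXg classGidl //.
by rewrite class_sym classGidl // class_sym.
Qed.

Lemma card_conjugators (y : gT) : y \in P ->
  #|[set z in P | ((y ^+ a) ^ z)%g == y]| =
  if ((y ^+ a)%g \in (y ^: P)%g) then #|'C_P[y]%g| else 0%N.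
Proof.
move=> Py; case: ifP => [/imsetP[t Pt Dt] | nfix].
  have -> : [set z in P | ((y ^+ a) ^ z)%g == y] = (t^-1 *: 'C_P[y])%g.
    apply/setP=> z; rewrite inE mem_lcoset invgK in_setI Dt -conjgM.
    rewrite [_ \in 'C[y]%g]inE conjg_set1 sub1set inE.
    by rewrite (groupMl _ Pt).
  exact: card_lcoset.
apply/eqP; rewrite cards_eq0; apply/eqP/setP=> z; rewrite !inE.
apply/negbTE/negP=> /andP[Pz /eqP Dy]; move/negP: nfix; apply.
by rewrite class_sym -{1}Dy memJ_class.
Qed.

Lemma sum_card_cent1_class (x : gT) : x \in P ->
  (\sum_(y in (x ^: P)%g) #|'C_P[y]%g|)%N = #|P|.
Proof.
move=> Px.
have cardPE y : y \in (x ^: P)%g -> (#|'C_P[y]%g| * #|(x ^: P)%g|)%N = #|P|.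
  by move=> /class_eqP <-; rewrite -index_cent1 Lagrange ?subsetIl.
have dvxP : (#|(x ^: P)%g| %| #|P|)%N by rewrite -(cardPE x (class_refl _ _)) dvdn_mull.
rewrite (eq_bigr (fun _ => #|P| %/ #|(x ^: P)%g|)%N); last first.
  move=> y /cardPE <-; rewrite mulnK // card_gt0.
  by apply/set0Pn; exists x; apply: class_refl.
by rewrite sum_nat_const mulnC divnK.
Qed.

Lemma sum_card_conjugators :
  (\sum_(y in P) #|[set z in P | ((y ^+ a) ^ z)%g == y]|)%N =
  (#|P| * #|[set C in classes P | [exists s in C, (s ^+ a)%g \in C]]|)%N.
Proof.
have /and3P[/eqP cov triv _] := classes_partition P.
rewrite -{1}cov big_trivIset //= mulnC -sum_nat_const.
rewrite (eq_bigl (fun C => (C \in classes P) && [exists s in C, (s ^+ a)%g \in C]));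
  last by move=> C; rewrite inE.
rewrite big_mkcondr /=; apply: eq_bigr => _ /imsetP[x Px ->].
have -> : [exists s in (x ^: P)%g, (s ^+ a)%g \in (x ^: P)%g] =
          ((x ^+ a)%g \in (x ^: P)%g).
  apply/existsP/idP => [[s /andP[/imsetP[u Pu ->]]] | xfix].
    by rewrite -(@mem_class_expgJ x u Pu) classGidl.
  by exists x; rewrite class_refl.
transitivity (\sum_(y in (x ^: P)%g)
  (if (x ^+ a)%g \in (x ^: P)%g then #|'C_P[y]%g| else 0%N))%N.
  apply: eq_bigr => _ /imsetP[u Pu ->].
  by rewrite card_conjugators ?groupJ ?mem_class_expgJ ?classGidl.
by case: ifP => _; [apply: sum_card_cent1_class | rewrite big1].
Qed.

End ConjugacyClassCount.

Lemma set1_lrcoset_fix (gT : finGroupType) (w z y : gT) :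
  ((w *: [set z] :* y^-1 == [set z]) = (w ^ z == y))%g.
Proof.
rewrite !mulg_set1 (inj_eq set1_inj) conjgE.
apply/eqP/eqP => [wzy | <-]; last by rewrite !invMg invgK !mulgA mulgK mulgV mul1g.
by rewrite -[(w * z)%g](mulgKV y) wzy mulKg.
Qed.

Lemma twisted_trace_roq_id (gT : finGroupType) (P : {group gT}) a :
  twisted_trace a P (roq_id P) =
  #|[set C in classes P | [exists s in C, (s ^+ a)%g \in C]]|%:R.
Proof.
rewrite /twisted_trace (eq_bigr (fun y => #|[set z in P | ((y ^+ a) ^ z)%g == y]|%:R)).
  by rewrite -natr_sum sum_card_conjugators natrM mulKf // pnatr_eq0 -lt0n cardG_gt0.
move=> y Py; rewrite /roq_id /infdef groupX // Py /=; congr (_%:R).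
have rcoset1E z : rcoset 1 z = [set z].
  by rewrite rcosetE; apply/setP=> u; rewrite mem_rcoset !inE -eq_mulgV1.
have -> : [set C in rcosets 1%G P | ((y ^+ a) *: C :* y^-1 == C)%g] =
          [set [set z] | z in [set z in P | ((y ^+ a) ^ z)%g == y]].
  apply/setP => C; rewrite inE; apply/andP/imsetP => [[/imsetP[z Pz ->]] | [z]].
    by rewrite rcoset1E set1_lrcoset_fix => fixz; exists z; rewrite ?inE ?Pz.
  rewrite inE => /andP[Pz fixz] ->; rewrite set1_lrcoset_fix fixz.
  by split=> //; apply/imsetP; exists z; rewrite ?rcoset1E.
by rewrite card_imset //; apply: set1_inj.
Qed.

Section AbelianInfDef.

Variables (gT : finGroupType) (G N : {group gT}).
Hypotheses (cGG : abelian G) (sNG : N \subset G).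

Lemma lrcoset_fix_abelian (w x g : gT) : w \in G -> x \in G -> g \in G ->
  ((w *: (N :* g) :* x^-1 == N :* g) = (w * x^-1 \in N))%g.
Proof.
move=> Gw Gx Gg.
have cG u v : u \in G -> v \in G -> commute u v by move=> *; apply: (centsP cGG).
apply/eqP/idP => [fixNg | Nwx].
  have : (w * g * x^-1 \in N :* g)%g.
    by rewrite -fixNg mem_rcoset invgK mulgKV mem_lcoset mulKg mem_rcoset mulgV group1.
  by rewrite mem_rcoset -(mulgA w) (cG g) ?groupV // mulgA mulgK.
apply/setP=> u; rewrite mem_rcoset mem_lcoset !mem_rcoset invgK.
have [Gu | nGu] := boolP (u \in G).
  have -> : (w^-1 * (u * x) * g^-1 = (w * x^-1)^-1 * (u * g^-1))%g.
    rewrite invMg invgK !mulgA; congr (_ * _)%g.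
    by rewrite -[RHS]mulgA; apply/esym/cG; rewrite ?groupM ?groupV.
  by rewrite groupMl ?groupV.
have notN v : v \notin G -> (v \in N) = false.
  by move=> nGv; apply/negbTE; apply: contra nGv => /(subsetP sNG).
rewrite !notN //; apply: contra nGu => Gv.
  by rewrite -(groupMr _ (groupVr Gg)).
by rewrite -(groupMr _ Gx) -(groupMl _ (groupVr Gw)) -(groupMr _ (groupVr Gg)).
Qed.

Lemma twisted_trace_infdef_abelian m :
  twisted_trace (1 + m) G (infdef G N) =
  #|[set x in G | (x ^+ m)%g \in N]|%:R / #|N|%:R.
Proof.
have infdefE x : x \in G ->
    infdef G N (x ^+ (1 + m))%g x = ((x ^+ m \in N)%g * #|G : N|%g)%:R.
  move=> Gx; rewrite /infdef groupX // Gx /=; congr (_%:R).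
  transitivity #|[set C in rcosets N G | (x ^+ m)%g \in N]|.
    apply: eq_card => C; rewrite !inE; apply: andb_id2l => /rcosetsP[g Gg ->].
    by rewrite lrcoset_fix_abelian ?(groupX _ Gx) // add1n expgSr mulgK.
  case: (_ \in N); rewrite ?mul1n ?mul0n.
    by apply: eq_card => C; rewrite inE andbT.
  by apply: eq_card0 => C; rewrite inE andbF.
have cardE : (\sum_(x in G) ((x ^+ m)%g \in N : nat))%N =
             #|[set x in G | (x ^+ m)%g \in N]|.
  rewrite -sum1_card [RHS](eq_bigl (fun x => (x \in G) && ((x ^+ m)%g \in N))).
    by rewrite big_mkcondr; apply: eq_bigr => x _; case: (_ \in N).
  by move=> x; rewrite inE.
rewrite /twisted_trace (eq_bigr _ infdefE) -natr_sum -big_distrl /= cardE.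
rewrite -(Lagrange sNG) !natrM invfM mulrC mulrACA mulfV ?mulr1 //.
by rewrite pnatr_eq0 -lt0n indexg_gt0.
Qed.

End AbelianInfDef.

Lemma sum_only1 (R : nmodType) (T : finType) (P : pred T) (F : T -> R) x0 :
  P x0 -> (forall x, P x -> x != x0 -> F x = 0) -> \sum_(x | P x) F x = F x0.
Proof.
by move=> Px0 F0; rewrite (bigD1 x0) //= big1 ?addr0 // => x /andP[Px nx]; apply: F0.
Qed.

Lemma mob_aux_fuel (cT : finGroupType) (P : {set cT}) n n' (N : {group cT}) :
  (#|N| <= n)%N -> (#|N| <= n')%N -> mob_aux P n N = mob_aux P n' N.
Proof.
elim: n n' N => [|n IH] n' N; first by rewrite leqNgt cardG_gt0.
case: n' => [|n']; first by move=> _; rewrite leqNgt cardG_gt0.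
move=> leN leN' /=; case: (N :==: 1%g) => //; congr (- _).
apply: eq_bigr => M /andP[_ /proper_card ltMN].
by apply: IH; rewrite -ltnS (leq_trans ltMN).
Qed.

Definition edge_count (p n k : nat) : nat :=
  if k == 0%N then 1%N else if (k <= n)%N then (p ^ k - p ^ k.-1)%N else 0%N.

Lemma edge_countE p n k : prime p ->
  (edge_count p n k)%:R =
  (p ^ minn n k)%:R - (if (0 < k)%N then (p ^ minn n.+1 k)%:R / p%:R else 0) :> algC.
Proof.
move=> pp; have p_neq0 : p%:R != 0 :> algC by rewrite pnatr_eq0 -lt0n prime_gt0.
have expSK j : (p ^ j.+1)%:R / p%:R = (p ^ j)%:R :> algC by rewrite expnSr natrM mulfK.
rewrite /edge_count; case: k => [|k] /=; first by rewrite minn0 subr0.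
case: ltnP => [lt_kn | le_nk].
  rewrite (minn_idPr lt_kn) (minn_idPr (leqW lt_kn)) expSK natrB //.
  by rewrite leq_exp2l ?prime_gt1.
by rewrite (minn_idPl (leqW le_nk)) (minn_idPl (le_nk : (n < k.+1)%N)) expSK subrr.
Qed.

Section CyclicPGroup.

Variables (p : nat) (cT : finGroupType) (G : {group cT}) (k : nat).
Hypotheses (pp : prime p) (cycG : cyclic G) (oG : #|G| = (p ^ k)%N).

Let pG : (p.-group G)%g. Proof. by rewrite /pgroup oG pnatX pnat_id. Qed.

Lemma card_expg_pexpn_eq1 j :
  #|[set x in G | (x ^+ (p ^ j))%g == 1%g]| = (p ^ minn j k)%N.
Proof.
have [g defG] := cyclicP cycG.
have og : #[g]%g = (p ^ k)%N by rewrite orderE -defG.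
have -> : [set x in G | (x ^+ (p ^ j))%g == 1%g] = 'Ohm_j(G)%g.
  rewrite (OhmEabelian pG); last exact: abelianS (Ohm_sub j G) (cyclic_abelian cycG).
  by apply/setP => x; rewrite !inE.
have pg : (p.-elt g)%g by apply: (mem_p_elt pG); rewrite defG cycle_id.
have -> : G = <[g]>%G by apply: val_inj.
rewrite (Ohm_p_cycle j pg) -orderE orderXgcd og pfactorK //.
rewrite (gcdn_idPr _) ?dvdn_exp2l ?leq_subr // -expnB ?prime_gt0 ?leq_subr //.
by rewrite -minnE minnC.
Qed.

Lemma cyclic_subgroup_uniq (Z1 Z2 : {group cT}) :
  Z1 \subset G -> Z2 \subset G -> #|Z1| = #|Z2| -> Z1 = Z2.
Proof.
move=> sZ1G sZ2G oZ12; apply: val_inj; apply/eqP.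
by rewrite /= (eq_subG_cyclic cycG) // oZ12.
Qed.

Lemma cyclic_subgroup_prime_exists (N : {group cT}) :
  N \subset G -> (p %| #|N|)%N -> exists2 Z : {group cT}, Z \subset N & #|Z| = p.
Proof.
move=> sNG p_dv_N; have [b defN] := cyclicP (cyclicS sNG cycG).
have := @cycle_sub_group _ b p; rewrite orderE -defN => /(_ p_dv_N).
set Z := (<[_]>)%G => defZ.
have : Z \in [set H : {group cT} | H \subset <[b]>%g & #|H| == p].
  by rewrite -defN defZ set11.
by rewrite inE -defN => /andP[sZN /eqP oZ]; exists Z.
Qed.

Lemma mem_subgroup_prime (Z : {group cT}) y : Z \subset G -> #|Z| = p -> y \in G ->
  (y \in Z) = ((y ^+ p)%g == 1%g).
Proof.
move=> sZG oZ Gy; apply/idP/idP => [Zy | ]; first by rewrite -oZ expg_cardG.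
rewrite -order_dvdn => /((primeP pp).2)/orP[].
  by rewrite order_eq1 => /eqP->; rewrite group1.
move=> /eqP oy; suff <- : <[y]>%G = Z by rewrite cycle_id.
by apply: cyclic_subgroup_uniq; rewrite ?cycle_subG // -orderE oy oZ.
Qed.

Lemma mobius_normal_cyclic (N : {group cT}) : N \subset G ->
  mobius_normal G N = ((N :==: 1%g)%:R - (#|N| == p)%:R : int).
Proof.
move: {2}#|N| (leqnn #|N|) => n; elim: n N => [|n IH] N leNn sNG.
  by move: leNn; rewrite leqNgt cardG_gt0.
have p_neq1 : (1 == p) = false by case: eqP pp => // <-.
rewrite /mobius_normal; have [N1 | ntN] := boolP (N :==: 1%g).
  by rewrite (eqP N1) cards1 /= N1 p_neq1 subr0.
have -> : mob_aux G #|N| N = mob_aux G (#|N|.-1).+1 N.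
  by apply: mob_aux_fuel; rewrite ?prednK ?cardG_gt0.
rewrite /= (negbTE ntN).
under eq_bigr => M /andP[_ ltMN].
  rewrite (_ : mob_aux G _ M = mobius_normal G M); last first.
    by apply: mob_aux_fuel; rewrite // -ltnS prednK ?cardG_gt0 ?proper_card.
  have leMn : (#|M| <= n)%N by rewrite -ltnS (leq_trans (proper_card ltMN)).
  rewrite IH ?(subset_trans (proper_sub ltMN)) //.
  over.
rewrite sumrB (@sum_only1 _ _ _ _ 1%G) ?normal1 ?proper1G //=; last first.
  by move=> M _ ntM; case: eqP => // M1; case/eqP: ntM; apply: val_inj.
rewrite eqxx; have [oNp | oN_neq_p] := eqVneq #|N| p.
  rewrite big1 ?subr0 ?sub0r // => M /andP[_ /proper_card].
  by rewrite oNp => /ltn_eqF->.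
have [_ p_dv_N _] := pgroup_pdiv (pgroupS sNG pG) ntN.
have [Z sZN oZ] := cyclic_subgroup_prime_exists sNG p_dv_N.
rewrite (@sum_only1 _ _ _ _ Z) ?oZ ?eqxx /=.
- by rewrite subrr oppr0 subr0.
- rewrite -sub_abelian_normal ?cyclic_abelian ?(subset_trans sZN) //=.
  by rewrite properEcard sZN oZ ltn_neqAle eq_sym oN_neq_p dvdn_leq.
move=> M /andP[_ /proper_sub sMN] neMZ; case: eqP => // oM; case/eqP: neMZ.
by apply: cyclic_subgroup_uniq; rewrite ?oM ?oZ ?(subset_trans _ sNG).
Qed.

Lemma twisted_trace_edge_cyclic n :
  twisted_trace (1 + p ^ n) G (edge_idem G) = (edge_count p n k)%:R.
Proof.
have cGG := cyclic_abelian cycG.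
transitivity (\sum_(N : {group cT} | (N <| G)%g)
   (mobius_normal G N)%:~R * twisted_trace (1 + p ^ n) G (infdef G N)).
  rewrite /twisted_trace /edge_idem exchange_big /= mulr_sumr; apply: eq_bigr => N _.
  by rewrite -mulr_sumr mulrCA.
under eq_bigr => N /normal_sub sNG.
  rewrite mobius_normal_cyclic // twisted_trace_infdef_abelian //.
  rewrite rmorphB /= !rmorph_nat mulrBl.
  over.
rewrite sumrB edge_countE //; congr (_ - _).
  rewrite (@sum_only1 _ _ _ _ 1%G) ?normal1 //=; last first.
    move=> M _ ntM; case: eqP => [M1 | _]; last by rewrite mul0r.
    by case/eqP: ntM; apply: val_inj.
  rewrite eqxx mul1r cards1 divr1 -(card_expg_pexpn_eq1 n); congr (_%:R).
  by apply: eq_card => x; rewrite !inE.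
case: (posnP k) => [k0 | k_gt0].
  rewrite big1 // => N /normal_sub sNG.
  have : (#|N| <= 1)%N by rewrite -(expn0 p) -k0 -oG subset_leq_card.
  by case: eqP => [-> | _]; [rewrite leqNgt prime_gt1 | rewrite mul0r].
have p_dv_G : (p %| #|G|)%N by rewrite oG dvdn_exp.
have [Z sZG oZ] := cyclic_subgroup_prime_exists (subxx G) p_dv_G.
rewrite (@sum_only1 _ _ _ _ Z) /=.
- rewrite oZ eqxx mul1r -(card_expg_pexpn_eq1 n.+1); congr (_%:R / _).
  apply: eq_card => x; rewrite !inE; case Gx : (x \in G) => //=.
  by rewrite (mem_subgroup_prime sZG oZ) ?groupX // -expgM expnSr.
- by rewrite -sub_abelian_normal.
move=> M /normal_sub sMG neMZ; case: eqP => [oM | _]; last by rewrite mul0r.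
by case/eqP: neMZ; apply: cyclic_subgroup_uniq; rewrite ?oM.
Qed.

End CyclicPGroup.

Lemma sum_edge_count0 p (s : seq nat) :
  (\sum_(x <- s) edge_count p 0 x)%N = count_mem 0%N s.
Proof. by elim: s => [|x s IH]; rewrite ?big_nil // big_cons IH; case: x. Qed.

Lemma edge_count_pred p m x : (0 < m)%N ->
  edge_count p m x = (edge_count p m.-1 x + (x == m) * (p ^ m - p ^ m.-1))%N.
Proof.
rewrite /edge_count; case: x => [|x] m_gt0; first by case: m m_gt0.
case: (ltngtP x.+1 m) => [lt_xm | lt_mx | <-] /=;
  by repeat (case: ifP => ?); rewrite ?mul0n ?mul1n ?addn0 ?add0n //; lia.
Qed.

Lemma sum_edge_count_pred p m (s : seq nat) : (0 < m)%N ->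
  (\sum_(x <- s) edge_count p m x)%N =
  (\sum_(x <- s) edge_count p m.-1 x + count_mem m s * (p ^ m - p ^ m.-1))%N.
Proof.
move=> m_gt0; elim: s => [|x s IH]; first by rewrite !big_nil.
rewrite !big_cons IH (edge_count_pred _ _ m_gt0) /= mulnDl eq_sym.
by rewrite -!addnA; congr (_ + _); rewrite addnCA.
Qed.

Lemma lnum_iso_edges p (gT : finGroupType) (P : {group gT})
    (cT : finGroupType) (c : nat -> {group cT}) (s : seq nat) n :
  prime p -> (p.-group P)%g ->
  (forall m, m \in s -> cyclic (c m) /\ #|c m| = (p ^ m)%N) ->
  count_mem 0%N s = 1%N ->
  roq_iso_edges P (fun i : 'I_(size s) => c (nth 0%N s i)) ->
  lnum p P n = (\sum_(x <- s) edge_count p n x)%N.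
Proof.
move=> pp pP cyc_c s0 [f [g [homfg _ _ sum_gf fg]]].
have [-> | n_gt0] := posnP n; first by rewrite sum_edge_count0 s0.
have coP := pgroup_coprime_add1_expn pp n_gt0 pP.
apply/eqP; rewrite -(eqr_nat algC) natr_sum; apply/eqP.
rewrite /lnum (negbTE (lt0n_neq0 n_gt0)) -twisted_trace_roq_id.
rewrite -(eq_twisted_trace _ _ sum_gf) twisted_trace_sum (big_nth 0%N) big_mkord.
apply: eq_bigr => i _; have [cyc_ci o_ci] := cyc_c _ (mem_nth 0%N (ltn_ord i)).
have pci : (p.-group (c (nth 0%N s i)))%g by rewrite /pgroup o_ci pnatX pnat_id.
rewrite (twisted_trace_comp _ (homfg i).1 (pgroup_coprime_add1_expn pp n_gt0 pci) coP).
have := fg i i; rewrite eqxx => /eq_twisted_trace ->.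
exact: twisted_trace_edge_cyclic.
Qed.

Theorem theorem3p2 (p : nat) (gT : finGroupType) (P : {group gT})
    (cT : finGroupType) (c : nat -> {group cT}) (s : seq nat) :
  prime p -> (p.-group P)%g ->
  (forall m, m \in s -> cyclic (c m) /\ #|c m| = (p ^ m)%N) ->
  count_mem 0%N s = 1%N ->
  roq_iso_edges P (fun i : 'I_(size s) => c (nth 0%N s i)) ->
  forall m, (0 < m)%N ->
    (count_mem m s)%:R =
      ((lnum p P m)%:R - (lnum p P m.-1)%:R) / (p ^ m.-1 * (p - 1))%:R :> rat.
Proof.
move=> pp pP cyc_c s0 isoP m m_gt0.
have lnumE n := lnum_iso_edges n pp pP cyc_c s0 isoP.
have pm_pred : (p ^ m - p ^ m.-1 = p ^ m.-1 * (p - 1))%N.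
  by rewrite -{1}(prednK m_gt0) expnSr mulnBr muln1.
rewrite !lnumE (sum_edge_count_pred _ _ m_gt0) natrD addrAC subrr add0r.
rewrite pm_pred natrM mulfK // pnatr_eq0 -lt0n muln_gt0 expn_gt0 prime_gt0 //.
by rewrite subn_gt0 prime_gt1.
Qed.
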